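(* Let $(\Gamma,\rho)$ be a weakly connected voltage graph with finite voltage group $G$. Then for any two vertices $v_i,v_j$ of $\Gamma$, $|\mathrm{Net}(v_i,V)|=|\mathrm{Net}(v_j,V)|$.
   Context: $\Gamma=(V,E)$ simple digraph, $e_{ij}$ the edge $v_i\to v_j$, $\rho:E\to G$. Semi-walk $w=v_{i_1}a_1\dots a_{n-1}v_{i_n}$ with each $a_j\in\{e_{i_ji_{j+1}},e_{i_{j+1}i_j}\}$; weakly connected: any two vertices joined by a semi-walk. Net voltage $f(w)=\bar\rho(a_1)\cdots\bar\rho(a_{n-1})$ with $\bar\rho(a_j)=\rho(a_j)$ for forward and $\rho(a_j)^{-1}$ for backward edges ($f=\mathbf 1$ on a single vertex). $\mathrm{Net}(v_i,V)=\{f(w): w$ a semi-walk starting at $v_i$ (ending anywhere)$\}$. *)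

From mathcomp Require Import all_boot all_fingroup.
From mathcomp Require Import boolp.
Set Implicit Arguments. Unset Strict Implicit. Unset Printing Implicit Defensive.
Import GroupScope.

Section VoltageGraph.
Variables (V : finType) (gT : finGroupType).
Variable E : rel V.
Variable rho : V -> V -> gT. (* voltage of edge u -> w (only meaningful when E u w) *)

(* A semi-walk starting at u is encoded by a list of steps (w, b):
   the next vertex w, and b = true for a forward edge u -> w,
   b = false for a backward edge w -> u. *)
Fixpoint semiwalk (u : V) (s : seq (V * bool)) : bool :=
  match s with
  | [::] => true
  | (w, b) :: s' => (if b then E u w else E w u) && semiwalk w s'
  end.

Fixpoint net_voltage (u : V) (s : seq (V * bool)) : gT :=
  match s with
  | [::] => 1
  | (w, b) :: s' => (if b then rho u w else (rho w u)^-1) * net_voltage w s'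
  end.

Definition walk_end (u : V) (s : seq (V * bool)) : V := last u (map fst s).

Definition weakly_connected : Prop :=
  forall x y : V, exists s, semiwalk x s /\ walk_end x s = y.

(* Net(v, V): voltages of all semi-walks starting at v, ending anywhere. *)
Definition Net (v : V) : {set gT} :=
  [set g | `[< exists s, semiwalk v s /\ net_voltage v s = g >] ].

End VoltageGraph.

(* Concatenating a fixed semi-walk from x to y with the semi-walks starting at y
   shows that left translation by its net voltage embeds Net(y) into Net(x);
   translations are injective, so |Net(y)| <= |Net(x)|, and weak connectivity
   gives the reverse inequality too. *)
From mathcomp Require Import all_boot all_fingroup.
From mathcomp Require Import boolp.
Import GroupScope.

Section NetVoltage.
Variables (V : finType) (gT : finGroupType) (E : rel V) (rho : V -> V -> gT).

Lemma semiwalk_cat u s t :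
  semiwalk E u (s ++ t) = semiwalk E u s && semiwalk E (walk_end u s) t.
Proof. by elim: s u => [|[w b] s IH] u //=; rewrite IH andbA. Qed.

Lemma net_voltage_cat u s t :
  net_voltage rho u (s ++ t) =
  net_voltage rho u s * net_voltage rho (walk_end u s) t.
Proof.
elim: s u => [|[w b] s IH] u /=; first by rewrite mul1g.
by rewrite IH mulgA.
Qed.

Lemma Net_mulg_sub x s :
  semiwalk E x s ->
  net_voltage rho x s *: Net E rho (walk_end x s) \subset Net E rho x.
Proof.
move=> walk_s; apply/subsetP => _ /lcosetP [h Nh ->].
move: Nh; rewrite !inE => /asboolP [t [walk_t <-]].
apply/asboolP; exists (s ++ t).
by rewrite semiwalk_cat walk_s walk_t net_voltage_cat.
Qed.

Lemma card_Net_le x y :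
  (exists s, semiwalk E x s /\ walk_end x s = y) ->
  #|Net E rho y| <= #|Net E rho x|.
Proof.
move=> [s [walk_s <-]]; rewrite -(card_lcoset _ (net_voltage rho x s)).
exact/subset_leq_card/Net_mulg_sub.
Qed.

End NetVoltage.

Theorem lemma5 (V : finType) (gT : finGroupType) (E : rel V)
    (rho : V -> V -> gT)
    (Hsimple : irreflexive E)
    (Hconn : weakly_connected E)
    (vi vj : V) :
  #|Net E rho vi| = #|Net E rho vj|.
Proof.
by apply/eqP; rewrite eqn_leq !card_Net_le.
Qed.
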